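(* Let $A$ be a finite-dimensional real associative $^*$-algebra with unity as described in the context, let $S$ be a genuine imaginary sphere (gis) of $A$ and let $M$ be the real vector subspace of $A$ inducing $S$. Then there exists a norm $\|\cdot\|$ on the real vector space $A$ such that $\|x\|^2=n(x)$ for every $x\in M$.
   Context: $A$ is a real associative algebra with unity $1$, of finite dimension $d>0$, with $\mathbb{R}$ identified with $\mathbb{R}1$, equipped with an anti-involution $x\mapsto x^c$, i.e. a real linear map with $(x^c)^c=x$, $(xy)^c=y^cx^c$ for all $x,y\in A$, and $x^c=x$ for $x\in\mathbb{R}$. The trace is $t(x)=x+x^c$ and the (squared) norm is $n(x)=xx^c$. The quadratic cone is $Q_A=\mathbb{R}\cup\{x\in A : t(x)\in\mathbb{R},\ n(x)\in\mathbb{R},\ 4n(x)>t(x)^2\}$, and $\mathbb{S}_A=\{J\in Q_A: J^2=-1\}$ (assumed nonempty); one has $\mathbb{S}_A=\{J\in A: t(J)=0,\ n(J)=1\}$. For $J\in\mathbb{S}_A$, $\mathbb{C}_J$ is the real subalgebra spanned by $1,J$. A nonempty subset $S\subset A$ is a genuine imaginary sphere (gis) if there is a real vector subspace $M$ with $\mathbb{R}\subset M\subset Q_A$ and $S=M\cap\mathbb{S}_A$; such $M$ is unique (namely $M=\bigcup_{J\in S}\mathbb{C}_J$) and is called the subspace inducing $S$. *)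

(* The real field R is taken to be an arbitrary real closed
   field (rcfType); this covers the reals and the statement is purely algebraic. *)
From HB Require Import structures.
From mathcomp Require Import all_boot all_order all_algebra all_field.
Set Implicit Arguments. Unset Strict Implicit. Unset Printing Implicit Defensive.
Import Order.TTheory GRing.Theory Num.Theory.
Local Open Scope ring_scope.

Section QuadCone.
Variables (R : rcfType) (A : falgType R) (c : A -> A).

Definition is_real (x : A) : Prop := exists r : R, x = r%:A.

Definition anti_involution : Prop :=
  [/\ linear c, (forall x, c (c x) = x),
      (forall x y, c (x * y) = c y * c x) & (forall r : R, c r%:A = r%:A)].

Definition trace (x : A) : A := x + c x.
Definition nrm (x : A) : A := x * c x.

Definition QA (x : A) : Prop :=
  is_real x \/
  exists a b : R, trace x = a%:A /\ nrm x = b%:A /\ a ^+ 2 < 4 * b.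

Definition SA (J : A) : Prop := QA J /\ J * J = -1.

Definition induces (M : {vspace A}) (S : A -> Prop) : Prop :=
  [/\ (<[1 : A]> <= M)%VS, (forall x, x \in M -> QA x)
    & (forall x, S x <-> (x \in M /\ SA x))].

Definition gis (S : A -> Prop) : Prop :=
  (exists J, S J) /\ exists M : {vspace A}, induces M S.

End QuadCone.

Definition is_norm (R : rcfType) (A : falgType R) (N : A -> R) : Prop :=
  [/\ (forall x, N x = 0 -> x = 0),
      (forall x y, N (x + y) <= N x + N y)
    & (forall (a : R) x, N (a *: x) = `|a| * N x)].

From HB Require Import structures.
From mathcomp Require Import all_boot all_order all_algebra all_field.
From mathcomp Require Import ring lra.
Import Order.TTheory GRing.Theory Num.Theory.
Set Implicit Arguments. Unset Strict Implicit. Unset Printing Implicit Defensive.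
Local Open Scope ring_scope.

(* A norm on A is obtained as the square root of a
   positive definite quadratic form Q on A, so it suffices to build such a Q
   with Q x = n(x) on M.  Let p be a projection of A onto M.  On M the norm
   x |-> n(x) is real-valued (M lies in the quadratic cone), and it is a
   positive definite quadratic form there because 4 n(x) > t(x)^2 >= 0 for
   non-real x, while n(r) = r^2 for real r.  Complete it by any positive
   definite form on the kernel of p, say the sum of squared coordinates:
       Q x = n(p x) + |x - p x|^2.
   The file first develops quadratic forms given together with a polar form
   (closure under sums and linear pull-backs, Cauchy-Schwarz, and the fact
   that the square root of a positive definite one is a norm), then shows
   that the real part of n is such a form, and finally assembles Q. *)

Section QuadraticForms.
Variable R : rcfType.

(* This is all the bilinear structure the norm construction needs. *)
Definition quadratic (V : lmodType R) (Q : V -> R) (b : V -> V -> R) : Prop :=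
  [/\ forall a x, Q (a *: x) = a ^+ 2 * Q x,
      forall x y, Q (x + y) = Q x + Q y + 2 * b x y
    & forall x y t, b x (t *: y) = t * b x y].

Definition posdef (V : lmodType R) (Q : V -> R) : Prop :=
  (forall x, 0 <= Q x) /\ (forall x, Q x = 0 -> x = 0).

Lemma quadraticD (V : lmodType R) (Q1 Q2 : V -> R) (b1 b2 : V -> V -> R) :
  quadratic Q1 b1 -> quadratic Q2 b2 ->
  quadratic (fun x => Q1 x + Q2 x) (fun x y => b1 x y + b2 x y).
Proof.
move=> [Q1Z Q1D b1Z] [Q2Z Q2D b2Z]; split=> [a x|x y|x y t].
- by rewrite Q1Z Q2Z mulrDr.
- by rewrite Q1D Q2D; ring.
- by rewrite b1Z b2Z mulrDr.
Qed.

Lemma quadratic_comp (U V : lmodType R) (f : {linear U -> V})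
    (Q : V -> R) (b : V -> V -> R) :
  quadratic Q b -> quadratic (fun x => Q (f x)) (fun x y => b (f x) (f y)).
Proof.
move=> [QZ QD bZ]; split=> [a x|x y|x y t]; rewrite ?linearZ ?linearD //=.
Qed.

Lemma cauchy_schwarz (V : lmodType R) (Q : V -> R) (b : V -> V -> R) :
  posdef Q -> quadratic Q b -> forall x y, b x y ^+ 2 <= Q x * Q y.
Proof.
move=> [Q0 Qdef] [QZ QD bZ] x y.
have [/Qdef->|Qy0] := eqVneq (Q y) 0.
  have -> : b x 0 = 0 by rewrite -(scale0r (0 : V)) bZ mul0r.
  by rewrite expr0n /= mulr_ge0.
have Qy_gt0 : 0 < Q y by rewrite lt0r Qy0 Q0.
(* evaluate Q at x + t y for the minimising t = - b x y / Q y *)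
pose t := - b x y / Q y.
have tQy : t * Q y = - b x y by rewrite /t divfK.
have := Q0 (x + t *: y); rewrite QD QZ bZ => Qt_ge0.
have : 0 <= (Q x + t ^+ 2 * Q y + 2 * (t * b x y)) * Q y
  by rewrite mulr_ge0 // ltW.
have -> : (Q x + t ^+ 2 * Q y + 2 * (t * b x y)) * Q y =
     Q x * Q y + (t * Q y) ^+ 2 + 2 * (t * Q y) * b x y by ring.
rewrite tQy; nra.
Qed.

Lemma sqrt_quadratic_norm (A : falgType R) (Q : A -> R) (b : A -> A -> R) :
  posdef Q -> quadratic Q b -> is_norm (fun x => Num.sqrt (Q x)).
Proof.
move=> Qpos Qquad; have [Q0 Qdef] := Qpos; have [QZ QD _] := Qquad.
split=> [x /eqP|x y|a x].
- by rewrite sqrtr_eq0 => QxL; apply: Qdef; apply/eqP; rewrite eq_le QxL Q0.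
- rewrite -ler_sqr ?nnegrE ?addr_ge0 ?sqrtr_ge0 // sqrrD !sqr_sqrtr // QD.
  set s := Num.sqrt (Q x) * Num.sqrt (Q y).
  have s_ge0 : 0 <= s by rewrite mulr_ge0 ?sqrtr_ge0.
  have s2 : s ^+ 2 = Q x * Q y by rewrite exprMn !sqr_sqrtr.
  have := cauchy_schwarz Qpos Qquad x y; rewrite -s2 => CS.
  have : b x y <= s by nra.
  rewrite mulr2n; lra.
- by rewrite QZ sqrtrM ?sqr_ge0 // sqrtr_sqr.
Qed.

Definition sumsq (V : vectType R) (x : V) : R :=
  \sum_(i < \dim {:V}) coord (vbasis fullv) i x ^+ 2.

Lemma sumsq_quadratic (V : vectType R) :
  quadratic (@sumsq V) (fun x y =>
    \sum_(i < \dim {:V}) coord (vbasis fullv) i x * coord (vbasis fullv) i y).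
Proof.
split=> [a x|x y|x y t]; rewrite /sumsq ?mulr_sumr -?big_split /=;
  by apply: eq_bigr => i _; rewrite ?linearZ ?linearD /=; ring.
Qed.

Lemma sumsq_posdef (V : vectType R) : posdef (@sumsq V).
Proof.
split=> [x|x /psumr_eq0P coord0]; first by apply: sumr_ge0 => i _; apply: sqr_ge0.
rewrite (coord_vbasis (memvf x)) big1 // => i _.
have /eqP := coord0 (fun j _ => sqr_ge0 _) i isT.
by rewrite sqrf_eq0 => /eqP->; rewrite scale0r.
Qed.

End QuadraticForms.

Section NormForm.
Variables (R : rcfType) (A : falgType R) (c : A -> A).
Hypothesis c_anti : anti_involution c.

(* The real coordinate of an element along R1 (meaningful on real elements). *)
Definition re (x : A) : R := coord [tuple (1 : A)] ord0 x.

Lemma reA (r : R) : re r%:A = r.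
Proof.
rewrite /re linearZ /=.
have := @coord_free _ _ _ [tuple (1 : A)] ord0 ord0; rewrite eqxx => -> //.
  by rewrite mulr1.
by rewrite free_cons /= span_nil memv0 oner_neq0 nil_free.
Qed.

(* The anti-involution is R-linear in the usual split form: additive and
   homogeneous (the latter uses c 0 = 0, which follows from c fixing reals). *)
Lemma c_additive : {morph c : x y / x + y}.
Proof. by case: c_anti => c_lin _ _ _ x y; rewrite -[x in LHS]scale1r c_lin scale1r. Qed.

Lemma c_scalable (a : R) (x : A) : c (a *: x) = a *: c x.
Proof.
case: c_anti => c_lin _ _ c_real.
have c0 : c 0 = 0 by rewrite -(scale0r 1) c_real.
by rewrite -[_ *: x]addr0 c_lin c0 addr0.
Qed.

Lemma re_nrm_quadratic :
  quadratic (fun x => re (nrm c x)) (fun x y => re (x * c y + y * c x) / 2).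
Proof.
rewrite /nrm /re; split=> [a x|x y|x y t].
- by rewrite c_scalable -scalerAl -scalerAr scalerA linearZ /= expr2.
- rewrite c_additive mulrDl !mulrDr !linearD /=.
  by rewrite [2 * _]mulrC mulfVK ?pnatr_eq0 //; ring.
- by rewrite c_scalable -scalerAl -scalerAr -scalerDr linearZ /= mulrA.
Qed.

(* On the quadratic cone the norm is real and positive definite: for real
   x = r1 it is r^2, otherwise it is > t(x)^2 / 4 >= 0. *)
Lemma nrm_QA (x : A) : QA c x ->
  [/\ nrm c x = (re (nrm c x))%:A, 0 <= re (nrm c x)
    & re (nrm c x) = 0 -> x = 0].
Proof.
case: c_anti => _ _ _ c_real.
case=> [[r ->]|[a [b [_ [-> ab]]]]]; last first.
  have b_gt0 : 0 < b by have := sqr_ge0 a; lra.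
  by rewrite reA; split=> // [|b0]; [exact: ltW | rewrite b0 ltxx in b_gt0].
have -> : nrm c r%:A = (r ^+ 2)%:A by rewrite /nrm c_real -scalerAl mul1r scalerA.
rewrite reA; split=> //; first exact: sqr_ge0.
by move/eqP; rewrite sqrf_eq0 => /eqP->; rewrite scale0r.
Qed.

End NormForm.

Theorem lemma1 (R : rcfType) (A : falgType R) (c : A -> A)
  (Hc : anti_involution c)
  (HSA : exists J : A, SA c J)
  (S : A -> Prop) (HS : gis c S)
  (M : {vspace A}) (HM : induces c M S) :
  exists N : A -> R, is_norm N /\ forall x, x \in M -> (N x ^+ 2)%:A = nrm c x.
Proof.
case: HM => _ MQ _.
pose p := projv M.
pose q := (\1 - projv M)%VF.
have qE x : q x = x - p x by rewrite add_lfunE opp_lfunE id_lfunE.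
pose Q x := re (nrm c (p x)) + sumsq (q x).
have nrm_p x := nrm_QA Hc (MQ _ (memv_proj M x)).
have [sumsq_ge0 sumsq_def] := @sumsq_posdef R A.
have Qquad := quadraticD (quadratic_comp p (re_nrm_quadratic Hc))
                         (quadratic_comp q (@sumsq_quadratic R A)).
have Qpos : posdef Q.
  split=> [x|x Qx0]; first by have [_ ? _] := nrm_p x; rewrite addr_ge0.
  have [_ n_ge0 n_def] := nrm_p x; have s_ge0 := sumsq_ge0 (q x).
  have /sumsq_def : sumsq (q x) = 0 by move: Qx0; rewrite /Q; lra.
  rewrite qE => /eqP; rewrite subr_eq0 => /eqP ->.
  by apply: n_def; move: Qx0; rewrite /Q; lra.
exists (fun x => Num.sqrt (Q x)); split; first exact: sqrt_quadratic_norm Qquad.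
move=> x xM; have px : p x = x by rewrite /p projv_id.
have [nx _ _] := nrm_QA Hc (MQ _ xM).
have qx0 : sumsq (q x) = 0.
  by rewrite qE px subrr /sumsq big1 // => i _; rewrite linear0 expr0n.
by rewrite sqr_sqrtr ?(proj1 Qpos) // /Q qx0 addr0 px -nx.
Qed.
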